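(* Fix $n\in\mathbb Z_{\ge2}$ and $k\in\mathbb Z_{\ge1}$, and let $\searrow_n=n(n-1)\cdots1$. Then $$\dim P^{\mathrm{Av}(\searrow_n)}_k=|\mathrm{Av}_k(\searrow_n)|-|\mathrm{Av}_{k-1}(\searrow_n)|.$$
   Context: $\mathcal S_m$ is the set of permutations of $[m]$. For $I=\{i_1<\dots<i_m\}$, $\mathrm{pat}_I(\sigma)$ is the unique permutation with entries in the same relative order as $\sigma(i_1),\dots,\sigma(i_m)$. $\sigma$ avoids $\pi$ if no $I$ has $\mathrm{pat}_I(\sigma)=\pi$; $\mathrm{Av}_m(\searrow_n)$ is the set of size-$m$ permutations avoiding $\searrow_n$, with $\mathrm{Av}_0(\searrow_n)$ consisting of the empty permutation, and $\mathrm{Av}(\searrow_n)=\bigcup_{m\ge1}\mathrm{Av}_m(\searrow_n)$. For $\pi\in\mathcal S_k,\sigma\in\mathcal S_m$, $\widetilde{\mathrm{c\text{-}occ}}(\pi,\sigma)$ is $1/m$ times the number of intervals $I=\{i,\dots,i+k-1\}$ with $\mathrm{pat}_I(\sigma)=\pi$. $P^{\mathrm{Av}(\searrow_n)}_k$ is the set of $\vec v\in[0,1]^{\mathcal S_k}$ for which there is a sequence $(\sigma^m)$ in $\mathrm{Av}(\searrow_n)$ with $|\sigma^m|\to\infty$ and $\widetilde{\mathrm{c\text{-}occ}}(\pi,\sigma^m)\to\vec v_\pi$ for all $\pi\in\mathcal S_k$. This set is convex; its dimension is the dimension of its affine hull. *)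

From HB Require Import structures.
From mathcomp Require Import all_boot all_order all_algebra all_fingroup.
From mathcomp Require Import reals.
Set Implicit Arguments. Unset Strict Implicit. Unset Printing Implicit Defensive.
Import Order.TTheory GRing.Theory Num.Theory.

(* Permutations of [m] are 'S_m (permutations of 'I_m = {0,..,m-1}). *)

Definition decr (n : nat) : 'S_n := perm (@rev_ord_inj n).

(* value of sigma at position x (0-based), 0 if out of range *)
Definition pv (m : nat) (s : 'S_m) (x : nat) : nat :=
  match insub x with Some i => val (s i) | None => 0%N end.

Definition pat_at (k m : nat) (pi : 'S_k) (s : 'S_m) (idx : 'I_k -> nat) : bool :=
  [forall j : 'I_k, forall j' : 'I_k,
     (pi j < pi j')%N == (pv s (idx j) < pv s (idx j'))%N].

Definition contains (k m : nat) (pi : 'S_k) (s : 'S_m) : bool :=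
  [exists idx : {ffun 'I_k -> 'I_m},
     [forall j : 'I_k, forall j' : 'I_k, (j < j')%N ==> (idx j < idx j')%N]
     && pat_at pi s (fun j => val (idx j))].

Definition avoids (k m : nat) (pi : 'S_k) (s : 'S_m) : bool := ~~ contains pi s.

Definition Av (n m : nat) : {set 'S_m} := [set s : 'S_m | avoids (decr n) s].

Definition cocc_count (k m : nat) (pi : 'S_k) (s : 'S_m) : nat :=
  #|[set i : 'I_m | (i + k <= m)%N && pat_at pi s (fun j => (i + j)%N)]|.

Definition cocc (R : realType) (k m : nat) (pi : 'S_k) (s : 'S_m) : R :=
  ((cocc_count pi s)%:R / m%:R)%R.

Definition Pset (R : realType) (n k : nat) (v : 'S_k -> R) : Prop :=
  (forall pi, (0 <= v pi <= 1)%R) /\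
  exists (sz : nat -> nat) (sig : forall t, 'S_(sz t)),
    (forall t, (0 < sz t)%N /\ sig t \in Av n (sz t)) /\
    (forall N, exists T, forall t, (T <= t)%N -> (N <= sz t)%N) /\
    (forall pi (e : R), (0 < e)%R -> exists T, forall t, (T <= t)%N ->
        (`| cocc R pi (sig t) - v pi | < e)%R).

Definition aff_indep (R : realType) (I : finType) (d : nat) (v : 'I_d.+1 -> (I -> R)) : Prop :=
  forall c : 'I_d -> R,
    (forall x : I, (\sum_(i < d) c i * (v (lift ord0 i) x - v ord0 x))%R = 0%R) ->
    forall i, c i = 0%R.

Definition has_affine_dim (R : realType) (I : finType) (S : (I -> R) -> Prop) (d : nat) : Prop :=
  (exists v : 'I_d.+1 -> (I -> R), (forall i, S (v i)) /\ aff_indep v) /\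
  (forall v : 'I_d.+2 -> (I -> R), (forall i, S (v i)) -> ~ aff_indep v).

(* Let d be the number of permutations in Av_k(n...1) that do not end with their
   maximum.  Appending a maximum maps Av_(k-1) bijectively onto the other elements of
   Av_k (for n >= 2), so d = |Av_k| - |Av_(k-1)|.

   Every point v of the feasible region satisfies v(pi) = 0 when pi
   contains n...1, sum_pi v(pi) = 1, and the flow equations: for each rho of size k-1,
   the patterns whose first k-1 entries have pattern rho carry the same mass as those
   whose last k-1 entries have pattern rho, because consecutive windows overlap in k-1
   positions.  A solution z of the homogeneous system that vanishes on the d
   distinguished patterns vanishes everywhere: a pattern ending with its maximum is the
   only such pattern with its prefix, so the flow equation expresses z there through
   patterns with fewer trailing left-to-right maxima; this leaves only the identity,
   which the sum equation kills.  So differences of points of the region lie in a space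
   of dimension at most d.

   For each distinguished pi, the periodic permutation with period block
   pi (+) id_k avoids n...1, and its pattern densities charge pi.  Together with the
   point of the identity permutation these d + 1 points are affinely independent: the
   density of a distinguished tau at the point of pi vanishes unless tau = pi or tau
   starts with strictly more right-to-left minima than pi. *)

From HB Require Import structures.
From mathcomp Require Import all_boot all_order all_algebra all_fingroup.
From mathcomp Require Import reals.
From mathcomp Require Import zify ring lra.
Set Implicit Arguments. Unset Strict Implicit. Unset Printing Implicit Defensive.
Import Order.TTheory GRing.Theory Num.Theory.

Lemma pvE m (s : 'S_m) (i : 'I_m) : pv s i = s i.
Proof. by rewrite /pv valK. Qed.

Lemma pv_lt m (s : 'S_m) x : x < m -> pv s x < m.
Proof. by move=> lt_xm; rewrite -[x]/(val (Ordinal lt_xm)) pvE. Qed.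

Lemma pv_inj m (s : 'S_m) x y : x < m -> y < m -> pv s x = pv s y -> x = y.
Proof.
move=> lt_xm lt_ym; rewrite -[x]/(val (Ordinal lt_xm)) -[y]/(val (Ordinal lt_ym)) !pvE.
by move/val_inj/perm_inj/(congr1 val).
Qed.

Definition permutes (N : nat) (f : nat -> nat) : Prop :=
  (forall x, x < N -> f x < N) /\ (forall x y, x < N -> y < N -> f x = f y -> x = y).

(* Defaults to the identity when [f] does not permute [0, N). *)
Definition perm_of_fun (N : nat) (f : nat -> nat) : 'S_N :=
  odflt 1%g [pick s : 'S_N | [forall i, val (s i) == f i]].

Lemma pv_perm_of_fun N f x : permutes N f -> x < N -> pv (perm_of_fun N f) x = f x.
Proof.
move=> [f_lt f_inj] lt_xN.
pose g (i : 'I_N) : 'I_N := Ordinal (f_lt _ (ltn_ord i)).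
have g_inj : injective g by move=> i j [] /f_inj eq_ij; apply/val_inj/eq_ij.
rewrite /perm_of_fun; case: pickP => [s /forallP s_f | no_s]; last first.
  by move/negbT/forallPn: (no_s (perm g_inj)) => [i]; rewrite permE eqxx.
by rewrite -[x]/(val (Ordinal lt_xN)) pvE (eqP (s_f _)).
Qed.

Lemma card_ord_count m (P : pred nat) : #|[set i : 'I_m | P i]| = count P (iota 0 m).
Proof.
rewrite cardsE cardE /enum_mem size_filter -val_enum_ord count_map enumT.
exact: eq_count.
Qed.

Lemma count_iota_ltn (P : pred nat) L m : L <= m ->
  count (fun x => (x < L) && P x) (iota 0 m) = count P (iota 0 L).
Proof.
move=> le_Lm; rewrite -(filter_iota_ltn 0 le_Lm) count_filter.
by apply: eq_count => x; rewrite /= andbC.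
Qed.

Lemma card_perm_lt k (p : 'S_k) x : x <= k -> #|[set j | p j < x]| = x.
Proof.
move=> le_xk; have -> : [set j | p j < x] = p @^-1: [set y : 'I_k | y < x].
  by apply/setP => j; rewrite !inE.
rewrite card_preimset; last exact: perm_inj.
rewrite (card_ord_count k (fun y => y < x)) -[RHS](size_iota 0) -count_predT.
by rewrite -(count_iota_ltn predT le_xk); apply: eq_count => y; rewrite andbT.
Qed.

Lemma perm_ltn_inj k (p q : 'S_k) : (forall i j, (p i < p j) = (q i < q j)) -> p = q.
Proof.
move=> pq; apply/permP => i; apply: val_inj => /=.
rewrite -(card_perm_lt p (ltnW (ltn_ord (p i)))) -(card_perm_lt q (ltnW (ltn_ord (q i)))).
by apply: eq_card => j; rewrite !inE pq.
Qed.

Lemma perm_max_last k (p : 'S_k.+1) :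
  (forall j : 'I_k.+1, j < k -> p j < p ord_max) -> p ord_max = ord_max.
Proof.
move=> p_max; set j0 := (p^-1)%g ord_max.
have [j0_max | j0_ne] := eqVneq j0 ord_max; first by rewrite -{1}j0_max permKV.
have lt_j0 : j0 < k by move: j0_ne (ltn_ord j0); rewrite -val_eqE /=; lia.
by have := p_max _ lt_j0; rewrite permKV /=; have := ltn_ord (p ord_max); lia.
Qed.

(** * Consecutive patterns *)

Definition is_pattern k (pi : 'S_k) (f : 'I_k -> nat) : bool :=
  [forall j : 'I_k, forall j' : 'I_k, (pi j < pi j') == (f j < f j')].

Definition pat_win k (pi : 'S_k) (f : nat -> nat) (x : nat) : bool :=
  is_pattern pi (fun j => f (x + j)).

Lemma is_patternP k (pi : 'S_k) (f : 'I_k -> nat) :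
  reflect (forall j j', (pi j < pi j') = (f j < f j')) (is_pattern pi f).
Proof.
apply: (iffP forallP) => [pi_f j j' | pi_f j]; last by apply/forallP => j'; rewrite pi_f.
by move/forallP/(_ j')/eqP: (pi_f j).
Qed.

Lemma eq_is_pattern k (pi : 'S_k) f g : f =1 g -> is_pattern pi f = is_pattern pi g.
Proof.
by move=> fg; apply: eq_forallb => j; apply: eq_forallb => j'; rewrite !fg.
Qed.

Lemma is_pattern_uniq k (pi pi' : 'S_k) f : is_pattern pi f -> is_pattern pi' f -> pi = pi'.
Proof.
by move=> /is_patternP pi_f /is_patternP pi'_f; apply: perm_ltn_inj => i j; rewrite pi_f pi'_f.
Qed.

Lemma is_pattern_exists k (f : 'I_k -> nat) : injective f -> exists pi : 'S_k, is_pattern pi f.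
Proof.
move=> f_inj; pose below j := [set j' | f j' < f j].
have below_lt i j : f i < f j -> #|below i| < #|below j|.
  move=> lt_f; apply: proper_card; apply/properP; split.
    by apply/subsetP => j'; rewrite !inE => /ltn_trans; apply.
  by exists i; rewrite !inE ?ltnn.
have below_ltE i j : (#|below i| < #|below j|) = (f i < f j).
  case: (ltngtP (f i) (f j)) => [/below_lt // | /below_lt /ltnW | /f_inj-> ].
    by rewrite leqNgt => /negbTE.
  by rewrite ltnn.
have below_k j : #|below j| < k.
  rewrite -[k in _ < k]card_ord; apply: proper_card; apply/properP; split.
    exact: subset_predT.
  by exists j; rewrite ?inE ?ltnn.
pose r j := Ordinal (below_k j).
have r_inj : injective r.
  move=> i j [] eq_r; apply: f_inj.
  by case: (ltngtP (f i) (f j)) => [/below_lt | /below_lt | //]; rewrite eq_r ltnn.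
by exists (perm r_inj); apply/is_patternP => i j; rewrite !permE below_ltE.
Qed.

Lemma pat_win_exists k m (s : 'S_m) x : x + k <= m -> exists pi : 'S_k, pat_win pi (pv s) x.
Proof.
move=> le_m; apply: is_pattern_exists => i j /pv_inj eq_x.
have lt_m (l : 'I_k) : x + l < m by apply: leq_trans le_m; rewrite ltn_add2l.
by apply: val_inj => /=; have := eq_x (lt_m i) (lt_m j); lia.
Qed.

Lemma pat_win_sub k k' (pi : 'S_k) (rho : 'S_k') g x o :
  o + k' <= k -> pat_win pi g x -> pat_win rho (pv pi) o = pat_win rho g (x + o).
Proof.
move=> le_k /is_patternP pi_g; apply: eq_forallb => j; apply: eq_forallb => j'.
have lt_k (i : 'I_k') : o + i < k by apply: leq_trans le_k; rewrite ltn_add2l.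
rewrite -[o + j]/(val (Ordinal (lt_k j))) -[o + j']/(val (Ordinal (lt_k j'))).
by rewrite !pvE pi_g /= !addnA.
Qed.

Lemma pat_win_contains k l m (pi : 'S_k) (tau : 'S_l) (s : 'S_m) x :
  x + k <= m -> pat_win pi (pv s) x -> contains tau pi -> contains tau s.
Proof.
move=> le_m /is_patternP s_pi /existsP[idx /andP[idx_inc /is_patternP pi_tau]].
have lt_m j : x + idx j < m by apply: leq_trans le_m; rewrite ltn_add2l.
apply/existsP; exists [ffun j => Ordinal (lt_m j)]; apply/andP; split.
  apply/forallP => j; apply/forallP => j'; rewrite !ffunE /= ltn_add2l.
  exact: (forallP (forallP idx_inc j) j').
by apply/is_patternP => j j'; rewrite !ffunE /= pi_tau !pvE s_pi.
Qed.

Lemma sum_count_disjoint (I : finType) (T : Type) (C : pred I) (P : I -> pred T) s :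
  (forall i j x, P i x -> P j x -> i = j) ->
  \sum_(i | C i) count (P i) s = count (fun x => [exists i, C i && P i x]) s.
Proof.
move=> P_disj; elim: s => [|x s IH] /=; first by rewrite big1.
rewrite big_split /= IH; congr (_ + _).
case: existsP => [[i /andP[Ci Pix]] | noP].
  rewrite (bigD1 i) //= Pix big1 // => j /andP[_ ne_ji]; case Pjx: (P j x) => //.
  by rewrite (P_disj _ _ _ Pjx Pix) eqxx in ne_ji.
by rewrite big1 // => i Ci; case Pix: (P i x) => //; case: noP; exists i; rewrite Ci.
Qed.

Lemma cocc_countE k m (pi : 'S_k.+1) (s : 'S_m) : k < m ->
  cocc_count pi s = count (pat_win pi (pv s)) (iota 0 (m - k)).
Proof.
move=> lt_km; rewrite /cocc_count.
rewrite (card_ord_count m (fun x => (x + k.+1 <= m) && pat_win pi (pv s) x)).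
rewrite -(count_iota_ltn _ (leq_subr k m)); apply: eq_count => x /=.
by congr (_ && _); lia.
Qed.

Lemma sum_cocc_count k m (s : 'S_m) (C : pred 'S_k.+1) : k < m ->
  \sum_(pi | C pi) cocc_count pi s =
  count (fun x => [exists pi, C pi && pat_win pi (pv s) x]) (iota 0 (m - k)).
Proof.
move=> lt_km; under eq_bigr => pi _ do rewrite cocc_countE //.
by apply: sum_count_disjoint => pi pi' x; apply: is_pattern_uniq.
Qed.

Lemma sum_cocc_count_all k m (s : 'S_m) : k < m -> \sum_(pi : 'S_k.+1) cocc_count pi s = m - k.
Proof.
move=> lt_km; rewrite (sum_cocc_count s predT) // -[RHS](size_iota 0) -count_predT.
apply: eq_in_count => x; rewrite mem_iota => /andP[_ lt_x].
have [|pi pi_x] := @pat_win_exists k.+1 m s x; first lia.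
by apply/existsP; exists pi.
Qed.

Lemma sum_cocc_count_win k m (s : 'S_m) (rho : 'S_k) o : o <= 1 -> k < m ->
  \sum_(pi : 'S_k.+1 | pat_win rho (pv pi) o) cocc_count pi s =
  count (pat_win rho (pv s)) (iota o (m - k)).
Proof.
move=> le_o1 lt_km; have le_k : o + k <= k.+1 by lia.
rewrite sum_cocc_count // -[o]addn0 iotaDl count_map.
apply: eq_in_count => x; rewrite mem_iota => /andP[_ lt_x] /=.
rewrite addn0 addnC; apply/existsP/idP => [[pi /andP[rho_pi pi_x]] | rho_x].
  by rewrite -(pat_win_sub _ le_k pi_x).
have [|pi pi_x] := @pat_win_exists k.+1 m s x; first lia.
by exists pi; rewrite pi_x (pat_win_sub _ le_k pi_x) andbT.
Qed.

Lemma count_iota_shift (a : pred nat) L :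
  count a (iota 0 L) <= count a (iota 1 L) + 1 /\ count a (iota 1 L) <= count a (iota 0 L) + 1.
Proof.
have := congr1 (count a) (iotaD 0 L 1); rewrite addn1 /= count_cat /= add0n addn0.
by case: (a 0); case: (a L) => /=; lia.
Qed.

Lemma cocc_count_eq0 n k m (pi : 'S_k) (s : 'S_m) :
  s \in Av n m -> contains (decr n) pi -> cocc_count pi s = 0.
Proof.
rewrite inE => s_av pi_dec; apply/eqP; rewrite cards_eq0; apply/eqP/setP => x.
rewrite !inE; apply/negbTE/andP => -[le_m x_pi].
by move/negP: s_av; apply; apply: pat_win_contains le_m x_pi pi_dec.
Qed.

(** * Linear equations satisfied by the feasible region *)

Definition balanced (V : zmodType) k (z : 'S_k.+1 -> V) : Prop :=
  forall rho : 'S_k,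
    (\sum_(pi | pat_win rho (pv pi) 0) z pi = \sum_(pi | pat_win rho (pv pi) 1) z pi)%R.

Section PsetEquations.
Variables (R : realType) (n : nat).
Local Open Scope ring_scope.

Lemma Pset_approx k (v : 'S_k -> R) (e : R) (M : nat) : Pset n v -> 0 < e ->
  exists m (s : 'S_m),
    [/\ (0 < m)%N, s \in Av n m, (M <= m)%N & forall pi, `|cocc R pi s - v pi| < e].
Proof.
move=> [_ [sz [sig [sig_Av [sz_big sig_cvg]]]]] e_gt0.
have [T T_cvg] := fin_all_exists (fun pi => sig_cvg pi e e_gt0).
have [TM TM_big] := sz_big M.
pose t := maxn (\max_pi T pi) TM.
have [sz_gt0 sig_t] := sig_Av t.
exists (sz t), (sig t); split=> // [|pi]; first exact/TM_big/leq_maxr.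
by apply: T_cvg; apply: leq_trans (leq_maxl _ _); apply: leq_bigmax.
Qed.

Lemma Pset_lineq k (v a : 'S_k -> R) (b C : R) : 0 <= C -> Pset n v ->
  (forall m (s : 'S_m), (0 < m)%N -> s \in Av n m -> (k <= m)%N ->
     `|\sum_pi a pi * cocc R pi s - b| <= C / m%:R) ->
  \sum_pi a pi * v pi = b.
Proof.
move=> C_ge0 v_P near_b; apply/eqP; rewrite -subr_eq0 -normr_eq0.
set X := \sum_pi a pi * v pi; set D := `|X - b|; apply/negPn/negP => D_neq0.
have D_gt0 : 0 < D by rewrite lt0r D_neq0 normr_ge0.
set A := \sum_pi `|a pi|.
have A_ge0 : 0 <= A by apply: sumr_ge0 => pi _; apply: normr_ge0.
pose e := D / (2 * (A + 1)).
have e_gt0 : 0 < e by rewrite divr_gt0 // mulr_gt0 // ltr_wpDl.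
have Ae : A * e + e = D / 2 by rewrite /e; field; rewrite lt0r_neq0 // ltr_wpDl.
have CD_ge0 : 0 <= 2 * C / D by rewrite divr_ge0 ?mulr_ge0 // ltW.
pose M := maxn k (Num.Def.archi_bound (2 * C / D)).
have [m [s [m_gt0 s_Av le_Mm s_near]]] := Pset_approx M v_P e_gt0.
set Y := \sum_pi a pi * cocc R pi s.
have XY : `|X - Y| <= A * e.
  rewrite /X /Y -sumrB mulr_suml; apply: le_trans (ler_norm_sum _ _ _) _.
  by apply: ler_sum => pi _; rewrite -mulrBr normrM ler_wpM2l // distrC ltW.
have Yb : `|Y - b| < D / 2.
  apply: le_lt_trans (near_b _ _ m_gt0 s_Av (leq_trans (leq_maxl _ _) le_Mm)) _.
  have m_big : 2 * C / D < m%:R.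
    apply: lt_le_trans (archi_boundP CD_ge0) _; rewrite ler_nat.
    exact: leq_trans (leq_maxr _ _) le_Mm.
  rewrite ltr_pdivrMr ?ltr0n // in m_big; rewrite ltr_pdivrMr ?ltr0n //.
  by rewrite mulrAC (mulrC D); lra.
by have := ler_distD Y X b; rewrite -/D; lra.
Qed.

Lemma sum_indicator (I : finType) (P : pred I) (f : I -> R) :
  \sum_i (P i)%:R * f i = \sum_(i | P i) f i.
Proof. by rewrite [RHS]big_mkcond; apply: eq_bigr => i _; case: (P i); rewrite ?mul1r ?mul0r. Qed.

Lemma Pset_zero k (v : 'S_k -> R) pi : Pset n v -> contains (decr n) pi -> v pi = 0.
Proof.
move=> v_P pi_dec.
have := Pset_lineq (a := fun tau => (tau == pi)%:R) (b := 0) (lexx 0) v_P.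
rewrite sum_indicator big_pred1_eq; apply=> m s _ s_Av _.
by rewrite sum_indicator big_pred1_eq /cocc (cocc_count_eq0 s_Av pi_dec) mulr0n !mul0r subr0 normr0.
Qed.

Lemma Pset_sum1 k (v : 'S_k.+1 -> R) : Pset n v -> \sum_pi v pi = 1.
Proof.
move=> v_P; under eq_bigr => pi _ do rewrite -[v pi]mul1r.
apply: Pset_lineq (ler0n _ k) v_P _ => m s m_gt0 _ lt_km.
have m_neq0 : m%:R != 0 :> R by rewrite pnatr_eq0 -lt0n.
under eq_bigr => pi _ do rewrite mul1r.
rewrite /cocc -mulr_suml -natr_sum sum_cocc_count_all // natrB; last lia.
rewrite mulrBl divff // addrAC subrr add0r normrN ger0_norm //.
by rewrite divr_ge0.
Qed.

Lemma Pset_balanced k (v : 'S_k.+1 -> R) : Pset n v -> balanced v.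
Proof.
move=> v_P rho; apply/eqP; rewrite -subr_eq0.
rewrite -(sum_indicator (fun pi => pat_win rho (pv pi) 0)).
rewrite -(sum_indicator (fun pi => pat_win rho (pv pi) 1)) -sumrB; apply/eqP.
under eq_bigr => pi _ do rewrite -mulrBl.
apply: Pset_lineq ler01 v_P _ => m s m_gt0 _ lt_km.
under eq_bigr => pi _ do rewrite mulrBl.
rewrite sumrB !sum_indicator /cocc -!mulr_suml -!natr_sum !sum_cocc_count_win //.
rewrite subr0 -mulrBl normrM (@ger0_norm _ m%:R^-1) ?invr_ge0 ?ler0n //.
rewrite ler_pM2r ?invr_gt0 ?ltr0n //.
have [le01 le10] := count_iota_shift (pat_win rho (pv s)) (m - k).
move: le01 le10; rewrite -!(ler_nat R) !natrD => le01 le10.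
by rewrite ler_norml; apply/andP; split; lra.
Qed.

End PsetEquations.

Lemma pat_win0P k (pi : 'S_k.+1) (rho : 'S_k) :
  reflect (forall i j, (rho i < rho j) = (pi (lift ord_max i) < pi (lift ord_max j)))
          (pat_win rho (pv pi) 0).
Proof.
apply: (iffP (is_patternP _ _)) => rho_pi i j; rewrite rho_pi;
  by rewrite -[0 + i](lift_max i) -[0 + j](lift_max j) !pvE.
Qed.

Lemma pat_win1P k (pi : 'S_k.+1) (rho : 'S_k) :
  reflect (forall i j, (rho i < rho j) = (pi (lift ord0 i) < pi (lift ord0 j)))
          (pat_win rho (pv pi) 1).
Proof.
apply: (iffP (is_patternP _ _)) => rho_pi i j; rewrite rho_pi;
  by rewrite -[1 + i](lift0 i) -[1 + j](lift0 j) !pvE.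
Qed.

Definition lrmax_suffix k (pi : 'S_k) (c : nat) : bool :=
  [forall j : 'I_k, forall j' : 'I_k, (k - c <= j) && (j' < j) ==> (pi j' < pi j)].

Lemma lt_perm_max k (p : 'S_k.+1) (i : 'I_k) :
  p ord_max = ord_max -> p (lift ord_max i) < p ord_max.
Proof.
move=> p_max; rewrite p_max /= ltn_neqAle -ltnS ltn_ord andbT.
apply: contraNneq (neq_lift ord_max i) => eq_k.
by apply/eqP/(@perm_inj _ p)/val_inj; rewrite p_max /= eq_k.
Qed.

Lemma lrmax_suffix1 k (pi : 'S_k.+1) : lrmax_suffix pi 1 = (pi ord_max == ord_max).
Proof.
apply/idP/eqP => [/forallP pi_rec | pi_max].
  apply: perm_max_last => j lt_jk; apply: (implyP (forallP (pi_rec ord_max) j)).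
  by rewrite subn1 leqnn.
apply/forallP => j; apply/forallP => j'; apply/implyP => /andP[le_j].
have -> : j = ord_max by apply/val_inj => /=; have := ltn_ord j; lia.
by case: (unliftP ord_max j') => [j'' -> _ | ->]; [apply: lt_perm_max | rewrite ltnn].
Qed.

Lemma lrmax_suffix_id k (pi : 'S_k) : lrmax_suffix pi k -> pi = 1%g.
Proof.
move=> /forallP pi_rec; apply: perm_ltn_inj => i j; rewrite !perm1.
have rec (i' j' : 'I_k) : j' < i' -> pi j' < pi i'.
  by move=> lt_ji; apply: (implyP (forallP (pi_rec i') j')); rewrite subnn.
case: (ltngtP i j) => [/rec // | /rec /ltnW | /val_inj->]; last by rewrite ltnn.
by rewrite leqNgt => /negbTE.
Qed.

Lemma lrmax_suffixS k (pi : 'S_k.+1) (rho : 'S_k) c :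
  pat_win rho (pv pi) 0 -> pi ord_max = ord_max -> lrmax_suffix rho c -> lrmax_suffix pi c.+1.
Proof.
move=> /pat_win0P pi_rho pi_max /forallP rho_rec.
apply/forallP => j; apply/forallP => j'; apply/implyP.
case: (unliftP ord_max j') => [i' -> | ->]; last by move=> /andP[_]; rewrite /= ltnNge leq_ord.
case: (unliftP ord_max j) => [i -> | ->]; last by move=> _; apply: lt_perm_max.
rewrite !lift_max subSS -pi_rho => /andP[le_i lt_i'i].
by apply: (implyP (forallP (rho_rec i) i')); rewrite le_i lt_i'i.
Qed.

Lemma lrmax_suffix_shift k (pi : 'S_k.+1) (rho : 'S_k) c :
  pat_win rho (pv pi) 1 -> lrmax_suffix pi c -> lrmax_suffix rho c.
Proof.
move=> /pat_win1P pi_rho /forallP pi_rec.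
apply/forallP => j; apply/forallP => j'; apply/implyP => /andP[le_j lt_j'j].
rewrite pi_rho; apply: (implyP (forallP (pi_rec (lift ord0 j)) (lift ord0 j'))).
by rewrite !lift0 ltnS lt_j'j andbT; lia.
Qed.

Definition decr_in n (F : nat -> nat) (N : nat) : Prop :=
  exists o : 'I_n -> nat, (forall j, o j < N) /\
    (forall j j' : 'I_n, j < j' -> o j < o j' /\ F (o j') < F (o j)).

Lemma decr_lt n (j j' : 'I_n) : (decr n j < decr n j') = (j' < j).
Proof. by rewrite /decr !permE /=; have := ltn_ord j; have := ltn_ord j'; lia. Qed.

Lemma decr_inP n m (s : 'S_m) : contains (decr n) s <-> decr_in n (pv s) m.
Proof.
split=> [/existsP[idx /andP[idx_inc /is_patternP idx_dec]] | [o [o_lt o_dec]]].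
  exists (fun j => val (idx j)); split=> [j | j j' lt_jj']; first exact: ltn_ord.
  by split; [apply: (implyP (forallP (forallP idx_inc j) j')) | rewrite -idx_dec decr_lt].
apply/existsP; exists [ffun j => Ordinal (o_lt j)]; apply/andP; split.
  apply/forallP => j; apply/forallP => j'; apply/implyP => lt_jj'; rewrite !ffunE.
  by have [] := o_dec _ _ lt_jj'.
apply/is_patternP => j j'; rewrite !ffunE /= decr_lt.
case: (ltngtP j j') => [lt_jj' | lt_j'j | /val_inj->]; last by rewrite !ltnn.
  by have [_ lt_o] := o_dec _ _ lt_jj'; rewrite ltnNge (ltnW lt_o).
by have [_ ->] := o_dec _ _ lt_j'j.
Qed.

Lemma eq_decr_in n F G N : (forall x, x < N -> F x = G x) -> decr_in n F N -> decr_in n G N.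
Proof.
move=> FG [o [o_lt o_dec]]; exists o; split=> // j j' /o_dec[lt_o].
by rewrite -!FG.
Qed.

Lemma perm_of_fun_Av n N F : permutes N F -> ~ decr_in n F N -> perm_of_fun N F \in Av n N.
Proof.
move=> F_perm F_av; rewrite inE; apply/negP => /decr_inP dec_F; apply: F_av.
by apply: eq_decr_in dec_F => x lt_xN; apply: pv_perm_of_fun.
Qed.

Definition dsum_id k (pi : 'S_k) (x : nat) : nat := if x < k then pv pi x else x.

Lemma permutes_dsum_id k (pi : 'S_k) N : k <= N -> permutes N (dsum_id pi).
Proof.
move=> le_kN; split=> [x lt_xN | x y lt_xN lt_yN]; rewrite /dsum_id.
  by case: ifP => // lt_xk; apply: leq_trans (pv_lt _ lt_xk) le_kN.
case: ifP => lt_xk; case: ifP => lt_yk; [exact: pv_inj | | | by []].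
  by have := pv_lt pi lt_xk; lia.
by have := pv_lt pi lt_yk; lia.
Qed.

Lemma dsum_id_decr_in n k (pi : 'S_k) N :
  1 < n -> decr_in n (dsum_id pi) N -> decr_in n (pv pi) k.
Proof.
move=> n_gt1 [o [_ o_dec]].
have desc_lt x y : x < y -> dsum_id pi y < dsum_id pi x -> y < k.
  rewrite /dsum_id; case: (ltnP y k) => // le_ky lt_xy.
  by case: ifP => [/(pv_lt pi) | _]; lia.
pose j0 : 'I_n := Ordinal (ltnW n_gt1); pose j1 : 'I_n := Ordinal n_gt1.
have o_lt j : o j < k.
  have [lt_o01 dec_o01] := o_dec j0 j1 isT.
  have [j_eq0 | j_gt0] := posnP j; last by have [] := o_dec j0 j j_gt0; apply: desc_lt.
  by rewrite (_ : j = j0) ?(ltn_trans lt_o01 (desc_lt _ _ lt_o01 dec_o01)) //; apply: val_inj.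
by exists o; split=> // j j' /o_dec[lt_o]; rewrite /dsum_id !o_lt.
Qed.

(** * Appending a maximum *)

Definition extmax k (rho : 'S_k) : 'S_k.+1 := perm_of_fun k.+1 (dsum_id rho).

Lemma pv_extmax k (rho : 'S_k) x : x < k.+1 -> pv (extmax rho) x = dsum_id rho x.
Proof. exact/pv_perm_of_fun/permutes_dsum_id. Qed.

Lemma extmax_max k (rho : 'S_k) : extmax rho ord_max = ord_max.
Proof. by apply: val_inj; rewrite /= -pvE pv_extmax //= /dsum_id ltnn. Qed.

Lemma pat_win_extmax k (rho : 'S_k) : pat_win rho (pv (extmax rho)) 0.
Proof.
have lt_k (i : 'I_k) : i < k.+1 := leqW (ltn_ord i).
by apply/is_patternP => i j; rewrite !pv_extmax ?lt_k // /dsum_id !ltn_ord !pvE.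
Qed.

Lemma extmax_prefix k (pi : 'S_k.+1) (rho : 'S_k) :
  pi ord_max = ord_max -> pat_win rho (pv pi) 0 -> pi = extmax rho.
Proof.
move=> pi_max /pat_win0P pi_rho; apply: perm_ltn_inj => i j.
have /pat_win0P ext_rho := pat_win_extmax rho; have ext_max := extmax_max rho.
case: (unliftP ord_max i) => [i' ->| ->]; case: (unliftP ord_max j) => [j' ->| ->].
- by rewrite -pi_rho ext_rho.
- by rewrite !lt_perm_max.
- by rewrite !ltnNge (ltnW (lt_perm_max _ pi_max)) (ltnW (lt_perm_max _ ext_max)).
- by rewrite !ltnn.
Qed.

Lemma extmax_inj k : injective (@extmax k).
Proof.
move=> r1 r2 eq_r; apply: (is_pattern_uniq (pat_win_extmax r1)).
by rewrite eq_r; apply: pat_win_extmax.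
Qed.

Lemma extmax_Av n k (rho : 'S_k) : 1 < n -> (extmax rho \in Av n k.+1) = (rho \in Av n k).
Proof.
move=> n_gt1; rewrite !inE; congr negb; apply/idP/idP => [/decr_inP ext_dec | ].
  apply/decr_inP/(dsum_id_decr_in n_gt1)/(eq_decr_in _ ext_dec) => x.
  exact: pv_extmax.
exact: pat_win_contains (leqnSn k : 0 + k <= k.+1) (pat_win_extmax rho).
Qed.

Definition Av_nomax n k : {set 'S_k.+1} :=
  Av n k.+1 :\: [set pi : 'S_k.+1 | pi ord_max == ord_max].

Lemma card_Av_nomax n k : 1 < n -> #|Av_nomax n k| = #|Av n k.+1| - #|Av n k|.
Proof.
move=> n_gt1; rewrite -(cardsID [set pi : 'S_k.+1 | pi ord_max == ord_max] (Av n k.+1)).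
suff -> : Av n k.+1 :&: [set pi : 'S_k.+1 | pi ord_max == ord_max] = @extmax k @: Av n k.
  by rewrite card_imset ?addKn //; apply: extmax_inj.
apply/setP => pi; rewrite in_setI; apply/andP/imsetP => [[pi_Av] | [rho rho_Av ->]].
  rewrite inE => /eqP pi_max.
  have [rho rho_pi] := @pat_win_exists k k.+1 pi 0 (leqnSn k).
  have pi_ext := extmax_prefix pi_max rho_pi.
  by exists rho; first rewrite -(extmax_Av _ n_gt1) -pi_ext.
by split; [rewrite extmax_Av | rewrite inE extmax_max].
Qed.

Lemma balanced_eq0 (V : zmodType) k (z : 'S_k.+1 -> V) :
  balanced z -> (\sum_pi z pi = 0)%R ->
  (forall pi : 'S_k.+1, pi ord_max != ord_max -> z pi = 0%R) -> forall pi, z pi = 0%R.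
Proof.
move=> z_bal z_sum z_nomax.
have z_prefix (pi : 'S_k.+1) (rho : 'S_k) : pi ord_max = ord_max -> pat_win rho (pv pi) 0 ->
    z pi = (\sum_(pi' | pat_win rho (pv pi') 1) z pi')%R.
  move=> pi_max pi_rho; rewrite -z_bal (bigD1 pi) //= big1 ?addr0 // => pi' /andP[pi'_rho].
  have [pi'_max | /z_nomax //] := eqVneq (pi' ord_max) ord_max.
  by rewrite (extmax_prefix pi'_max pi'_rho) -(extmax_prefix pi_max pi_rho) eqxx.
(* Induction on the number of trailing left-to-right maxima, which [z_prefix] decreases. *)
have z_rec u (pi : 'S_k.+1) : pi ord_max = ord_max -> ~~ lrmax_suffix pi u.+1 -> z pi = 0%R.
  elim: u pi => [|u IH] pi pi_max; first by rewrite lrmax_suffix1 pi_max eqxx.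
  move=> pi_rec; have [rho pi_rho] := @pat_win_exists k k.+1 pi 0 (leqnSn k).
  rewrite (z_prefix _ _ pi_max pi_rho) big1 // => pi' pi'_rho.
  have [pi'_max | /z_nomax //] := eqVneq (pi' ord_max) ord_max.
  apply: IH pi'_max _; apply: contra pi_rec => pi'_rec.
  exact: lrmax_suffixS pi_rho pi_max (lrmax_suffix_shift pi'_rho pi'_rec).
have z_ne1 (pi : 'S_k.+1) : pi != 1%g -> z pi = 0%R.
  move=> pi_ne1; have [pi_max | /z_nomax //] := eqVneq (pi ord_max) ord_max.
  by apply: (z_rec k) => //; apply: contra pi_ne1 => /lrmax_suffix_id ->.
have z1 : z 1%g = 0%R by rewrite -z_sum (bigD1 1%g) //= big1 ?addr0 // => pi /z_ne1.
by move=> pi; have [-> | /z_ne1] := eqVneq pi 1%g.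
Qed.

Lemma sum_affine_comb (R : ringType) (I : finType) d (P : pred I) (c : 'I_d -> R)
    (w : 'I_d -> I -> R) (w0 : I -> R) :
  (\sum_(x | P x) \sum_(i < d) c i * (w i x - w0 x) =
   \sum_(i < d) c i * (\sum_(x | P x) w i x - \sum_(x | P x) w0 x))%R.
Proof.
rewrite exchange_big; apply: eq_bigr => i _; rewrite -sumrB mulr_sumr.
by apply: eq_bigr.
Qed.

Section UpperBound.
Variables (R : realType) (n : nat).
Local Open Scope ring_scope.

Lemma Pset_not_aff_indep k d (v : 'I_d.+2 -> 'S_k.+1 -> R) :
  (#|Av_nomax n k| <= d)%N -> (forall i, Pset n (v i)) -> ~ aff_indep v.
Proof.
move=> le_d v_P v_indep.
pose M : 'M[R]_(d.+1, #|Av_nomax n k|) :=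
  \matrix_(i, j) (v (lift ord0 i) (enum_val j) - v ord0 (enum_val j)).
suff /eqP rkM : row_free M by have := rank_leq_col M; rewrite rkM; lia.
apply: inj_row_free => u uM0; apply/rowP => l; rewrite mxE.
pose z x := \sum_i u 0 i * (v (lift ord0 i) x - v ord0 x).
suff z0 : forall x, z x = 0 by apply: v_indep z0 l.
apply: balanced_eq0.
- move=> rho; rewrite /z !sum_affine_comb; apply: eq_bigr => i _.
  by rewrite !(Pset_balanced (v_P _)).
- rewrite /z (sum_affine_comb predT) big1 // => i _.
  by rewrite !(Pset_sum1 (v_P _)) subrr mulr0.
move=> x x_nomax; have [x_Av | x_nAv] := boolP (x \in Av n k.+1).
  have xD : x \in Av_nomax n k by rewrite /Av_nomax in_setD x_Av inE x_nomax.
  have := congr1 (fun A : 'M[R]_(1, #|Av_nomax n k|) => A 0 (enum_rank_in xD x)) uM0.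
  rewrite !mxE => <-.
  by apply: eq_bigr => i _; rewrite mxE enum_rankK_in.
have x_dec : contains (decr n) x by move: x_nAv; rewrite inE negbK.
by rewrite /z big1 // => i _; rewrite !(Pset_zero (v_P _) x_dec) subrr mulr0.
Qed.

End UpperBound.

(** * Periodic permutations *)

Definition periodic (P : nat) (s : nat -> nat) (x : nat) : nat := x %/ P * P + s (x %% P).

Lemma count_iota_periodic (a : pred nat) P r : (forall x, a (x + P) = a x) ->
  count a (iota 0 (r * P)) = r * count a (iota 0 P).
Proof.
move=> aP; have aPq q x : a (q * P + x) = a x.
  by elim: q => [|q IH]; rewrite ?mul0n ?add0n // mulSnr -addnA (addnC P) addnA aP IH.
elim: r => [|r IH]; first by rewrite !mul0n.
rewrite mulSnr iotaD count_cat IH add0n -{1}(addn0 (r * P)) iotaDl count_map mulSnr.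
by congr (_ + _); apply: eq_count => x /=; apply: aPq.
Qed.

Section Periodic.
Variables (P : nat) (s : nat -> nat).
Hypotheses (P_gt0 : 0 < P) (s_perm : permutes P s).
Local Notation F := (periodic P s).

Lemma periodic_mod_lt x : s (x %% P) < P.
Proof. by case: s_perm => s_lt _; apply/s_lt/ltn_pmod. Qed.

Lemma periodicD x : F (x + P) = F x + P.
Proof. by rewrite /periodic modnDr divnDr ?dvdnn // divnn P_gt0 mulnDl mul1n; lia. Qed.

Lemma permutes_periodic r : permutes (r * P) F.
Proof.
split=> [x lt_x | x y _ _ eq_F].
  have := periodic_mod_lt x; have : x %/ P < r by rewrite ltn_divLR.
  by rewrite /periodic; nia.
have divF z : F z %/ P = z %/ P.
  by rewrite /periodic divnMDl // (divn_small (periodic_mod_lt z)) addn0.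
have modF z : F z %% P = s (z %% P).
  by rewrite /periodic modnMDl (modn_small (periodic_mod_lt z)).
have eq_mod : x %% P = y %% P.
  by case: s_perm => _ s_inj; apply: s_inj; rewrite ?ltn_pmod // -!modF eq_F.
by rewrite (divn_eq x P) (divn_eq y P) eq_mod -(divF x) -(divF y) eq_F.
Qed.

Lemma periodic_block x y : x < y -> F y < F x -> x %/ P = y %/ P.
Proof.
move=> lt_xy; rewrite /periodic => lt_F; have := periodic_mod_lt x.
have le_div : x %/ P <= y %/ P by apply/leq_div2r/ltnW.
have [// | lt_div] : x %/ P = y %/ P \/ x %/ P < y %/ P by lia.
have : (x %/ P).+1 * P <= y %/ P * P by rewrite leq_mul2r lt_div orbT.
by rewrite mulSn; lia.
Qed.

Lemma periodic_decr_in n N : decr_in n F N -> decr_in n s P.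
Proof.
move=> [o [_ o_dec]].
have o_blk j j' : o j %/ P = o j' %/ P.
  case: (ltngtP j j') => [lt_jj' | lt_j'j | /val_inj-> //].
    by have [] := o_dec _ _ lt_jj'; apply: periodic_block.
  by have [lt_o dec_o] := o_dec _ _ lt_j'j; rewrite (periodic_block lt_o dec_o).
exists (fun j => o j %% P); split=> [j | j j' /o_dec[lt_o dec_o]]; first exact: ltn_pmod.
move: lt_o dec_o; rewrite /periodic (o_blk j' j) ltn_add2l => lt_o ->; split=> //.
by move: lt_o; rewrite {1}(divn_eq (o j) P) {1}(divn_eq (o j') P) (o_blk j' j) ltn_add2l.
Qed.

Lemma pat_win_periodicD k (tau : 'S_k) x : pat_win tau F (x + P) = pat_win tau F x.
Proof.
apply: eq_forallb => j; apply: eq_forallb => j'.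
by rewrite (addnAC x P j) (addnAC x P j') !periodicD ltn_add2r.
Qed.

Lemma cocc_count_periodic k (tau : 'S_k.+1) r : k < r * P ->
  cocc_count tau (perm_of_fun (r * P) F) <= r * count (pat_win tau F) (iota 0 P) <=
  cocc_count tau (perm_of_fun (r * P) F) + k.
Proof.
move=> lt_k; rewrite cocc_countE //.
have -> : count (pat_win tau (pv (perm_of_fun (r * P) F))) (iota 0 (r * P - k)) =
          count (pat_win tau F) (iota 0 (r * P - k)).
  apply: eq_in_count => x; rewrite mem_iota => /andP[_ lt_x].
  apply: eq_is_pattern => j; apply: pv_perm_of_fun; first exact: permutes_periodic.
  by have := ltn_ord j; lia.
rewrite -count_iota_periodic; last exact: pat_win_periodicD.
rewrite -[in iota 0 (r * P)](subnK (ltnW lt_k)) iotaD count_cat leq_addr leq_add2l /=.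
by apply: leq_trans (count_size _ _) _; rewrite size_iota.
Qed.

End Periodic.

(* The consecutive-pattern densities of the infinite periodic permutation with period
   block [s]. *)
Definition per_point {R : realType} {k : nat} (P : nat) (s : nat -> nat) (tau : 'S_k) : R :=
  ((count (pat_win tau (periodic P s)) (iota 0 P))%:R / P%:R)%R.

Section PeriodicPoint.
Variables (R : realType) (n : nat).
Local Open Scope ring_scope.

Lemma cocc_periodic_dist k P s (tau : 'S_k.+1) r :
  (0 < P)%N -> permutes P s -> (k < r * P)%N ->
  `|cocc R tau (perm_of_fun (r * P) (periodic P s)) - per_point P s tau| <= k%:R / (r * P)%:R.
Proof.
move=> P_gt0 s_perm lt_k; have /andP[le_A le_Ak] := cocc_count_periodic P_gt0 s_perm tau lt_k.
set A := cocc_count _ _ in le_A le_Ak *; set c := count _ (iota 0 P) in le_A le_Ak.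
have rP_gt0 : (0 : R) < (r * P)%:R by rewrite ltr0n; lia.
have -> : per_point P s tau = (r * c)%:R / (r * P)%:R :> R.
  have r_gt0 : (0 < r)%N by lia.
  by rewrite /per_point !natrM; field; rewrite !pnatr_eq0 -!lt0n P_gt0 r_gt0.
rewrite /cocc -mulrBl normrM (@ger0_norm _ (r * P)%:R^-1) ?invr_ge0 ?ler0n //.
rewrite ler_pM2r ?invr_gt0 //; move: le_A le_Ak; rewrite -!(ler_nat R) natrD => le_A le_Ak.
by rewrite ler_norml; apply/andP; split; lra.
Qed.

Lemma per_point_Pset k P s : (0 < P)%N -> permutes P s -> ~ decr_in n s P ->
  Pset n (per_point P s : 'S_k.+1 -> R).
Proof.
move=> P_gt0 s_perm s_av; split.
  move=> tau; rewrite divr_ge0 ?ler0n //= ler_pdivrMr ?ltr0n // mul1r ler_nat.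
  by rewrite -[X in (_ <= X)%N](size_iota 0 P) count_size.
exists (fun t => t.+1 * P)%N, (fun t => perm_of_fun (t.+1 * P) (periodic P s)); split.
  move=> t; split; first by rewrite muln_gt0.
  apply: perm_of_fun_Av; first exact: permutes_periodic.
  by move/(periodic_decr_in P_gt0 s_perm).
split; first by move=> N; exists N => t le_Nt; nia.
move=> tau e e_gt0; have ke_ge0 : 0 <= k%:R / e by rewrite divr_ge0 ?ler0n ?ltW.
exists (maxn k (Num.Def.archi_bound (k%:R / e))) => t; rewrite geq_max => /andP[le_kt le_et].
have lt_kN : (k < t.+1 * P)%N by nia.
apply: le_lt_trans (cocc_periodic_dist tau P_gt0 s_perm lt_kN) _.
rewrite ltr_pdivrMr ?ltr0n ?muln_gt0 // mulrC -ltr_pdivrMr //.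
by apply: lt_le_trans (archi_boundP ke_ge0) _; rewrite ler_nat; nia.
Qed.

End PeriodicPoint.

Definition rlmin_prefix k (tau : 'S_k) (c : nat) : bool :=
  [forall j : 'I_k, forall j' : 'I_k, (j <= c) && (j < j') ==> (tau j < tau j')].

Definition rlmin_count k (tau : 'S_k) : nat := #|[set c : 'I_k | rlmin_prefix tau c]|.

Lemma rlmin_prefix_le k (tau : 'S_k) c c' :
  c' <= c -> rlmin_prefix tau c -> rlmin_prefix tau c'.
Proof.
move=> le_c /forallP tau_min; apply/forallP => j; apply/forallP => j'; apply/implyP.
by move=> /andP[le_j lt_jj']; apply: (implyP (forallP (tau_min j) j')); rewrite (leq_trans le_j).
Qed.

Lemma rlmin_prefix_max k (tau : 'S_k.+1) : rlmin_prefix tau k -> tau ord_max = ord_max.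
Proof.
move=> /forallP tau_min; apply: perm_max_last => j lt_jk.
by apply: (implyP (forallP (tau_min j) ord_max)); rewrite lt_jk (ltnW lt_jk).
Qed.

Section DsumIdWindows.
Variables (k : nat) (pi : 'S_k.+1).
Local Notation K := k.+1.
Local Notation F := (periodic (K + K) (dsum_id pi)).

Lemma periodic_dsum_lt y : y < K + K -> F y = dsum_id pi y.
Proof. by move=> lt_y; rewrite /periodic divn_small // modn_small. Qed.

Lemma periodic_dsum_ge y : K + K <= y < K + K + (K + K) ->
  F y = dsum_id pi (y - (K + K)) + (K + K).
Proof.
move=> /andP[le_y lt_y]; rewrite -{1}(subnK le_y) periodicD //.
by rewrite periodic_dsum_lt //; lia.
Qed.

Lemma pat_win_dsum0 : pat_win pi F 0.
Proof.
apply/is_patternP => i j; rewrite !add0n !periodic_dsum_lt ?ltn_addr //.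
by rewrite /dsum_id !ltn_ord !pvE.
Qed.

Lemma pat_win_dsum_max (tau : 'S_K) i : 0 < i < K -> pat_win tau F i -> tau ord_max = ord_max.
Proof.
move=> /andP[i_gt0 lt_iK] /is_patternP tau_F; apply: perm_max_last => j lt_jk.
rewrite tau_F !periodic_dsum_lt /=; try lia.
rewrite /dsum_id (_ : i + k < K = false); last by lia.
by case: ifP => [/(pv_lt pi) | _]; lia.
Qed.

Lemma periodic_dsum_far (i j j' : nat) : K <= i < K + K -> j < j' < K ->
  (K + K - i <= j -> pv pi (j - (K + K - i)) < pv pi (j' - (K + K - i))) ->
  F (i + j) < F (i + j').
Proof.
move=> /andP[le_Ki lt_i] /andP[lt_jj' lt_j'] pi_lt.
have [lt_jl | le_lj] := ltnP j (K + K - i).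
  rewrite (@periodic_dsum_lt (i + j)); last by lia.
  rewrite /dsum_id (_ : i + j < K = false); last by lia.
  have [lt_j'l | le_lj'] := ltnP j' (K + K - i).
    rewrite periodic_dsum_lt; last by lia.
    by rewrite /dsum_id (_ : i + j' < K = false); lia.
  by rewrite periodic_dsum_ge; lia.
rewrite !periodic_dsum_ge; try lia.
rewrite (_ : i + j - (K + K) = j - (K + K - i)); last by lia.
rewrite (_ : i + j' - (K + K) = j' - (K + K - i)); last by lia.
by rewrite /dsum_id !ifT ?ltn_add2r ?pi_lt //; lia.
Qed.

Lemma rlmin_prefix_far (tau : 'S_K) i c : K <= i < K + K -> pat_win tau F i ->
  (forall c', c' + (K + K - i) <= c -> rlmin_prefix pi c') -> rlmin_prefix tau c.
Proof.
move=> i_far /is_patternP tau_F pi_min.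
apply/forallP => j; apply/forallP => j'; apply/implyP => /andP[le_jc lt_jj'].
rewrite tau_F; apply: periodic_dsum_far => // [|le_lj]; first by rewrite lt_jj' ltn_ord.
have lt_K (x : 'I_K) : x - (K + K - i) < K by have := ltn_ord x; lia.
have pi_min_j : rlmin_prefix pi (j - (K + K - i)) by apply: pi_min; lia.
move/forallP/(_ (Ordinal (lt_K j)))/forallP/(_ (Ordinal (lt_K j')))/implyP: pi_min_j.
rewrite -[j - _]/(val (Ordinal (lt_K j))) -[j' - _]/(val (Ordinal (lt_K j'))).
by rewrite !pvE; apply; rewrite /= leqnn /=; lia.
Qed.

(* A window of [F] starting in (0, K) ends with its maximum; one starting in [K, 2K) is
   an increasing run of minima followed by a prefix of [pi], which strictly lengthens the
   initial run of right-to-left minima of [pi]. *)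
Lemma rlmin_count_lt (tau : 'S_K) i : i < K + K ->
  pi ord_max != ord_max -> tau ord_max != ord_max -> tau != pi ->
  pat_win tau F i -> rlmin_count pi < rlmin_count tau.
Proof.
move=> lt_i pi_nomax tau_nomax tau_ne tau_F.
have [i0 | i_gt0] := posnP i.
  move: tau_F; rewrite i0 => /is_pattern_uniq/(_ pat_win_dsum0) eq_tau.
  by rewrite eq_tau eqxx in tau_ne.
have [lt_iK | le_Ki] := ltnP i K.
  by rewrite (@pat_win_dsum_max tau i) ?i_gt0 ?eqxx in tau_nomax.
have i_far : K <= i < K + K by rewrite le_Ki lt_i.
have ex_c : exists c, ~~ rlmin_prefix pi c.
  by exists k; apply: contra pi_nomax => /rlmin_prefix_max ->.
case: (ex_minnP ex_c) => c0 pi_c0 c0_min.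
have lt_c0 : c0 < K.
  rewrite ltnS; apply: c0_min; apply: contra pi_nomax => /rlmin_prefix_max ->.
  by rewrite eqxx.
apply: proper_card; apply/properP; split.
  apply/subsetP => c; rewrite !inE => pi_c; apply: rlmin_prefix_far i_far tau_F _ => c' le_c'.
  by apply: rlmin_prefix_le pi_c; lia.
exists (Ordinal lt_c0); rewrite !inE ?pi_c0 //.
apply: rlmin_prefix_far i_far tau_F _ => c' /= le_c'; apply/negPn/negP => /c0_min; lia.
Qed.

End DsumIdWindows.

Lemma triangular_indep (R : idomainType) (I J : finType) (w : J -> I -> R) (p : J -> I)
    (r : J -> nat) (c : J -> R) :
  (forall j, w j (p j) != 0%R) -> (forall j j', j != j' -> w j (p j') != 0%R -> r j < r j') ->
  (forall j', \sum_j c j * w j (p j') = 0)%R -> forall j, c j = 0%R.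
Proof.
move=> w_diag w_tri c_sum j0; apply/eqP/negPn/negP => c_j0.
case: (@arg_minnP _ j0 (fun j => c j != 0%R) r c_j0) => j c_j j_min.
move/eqP: (c_sum j); rewrite (bigD1 j) //= big1 ?addr0.
  by rewrite mulf_eq0 (negbTE c_j) (negbTE (w_diag j)).
move=> j' ne_j'; have [-> | c_j'] := eqVneq (c j') 0%R; first by rewrite mul0r.
have [-> | w_j'] := eqVneq (w j' (p j)) 0%R; first by rewrite mulr0.
by have := w_tri _ _ ne_j' w_j'; have := j_min _ c_j'; lia.
Qed.

Section LowerBound.
Variables (R : realType) (n : nat).
Hypothesis n_gt1 : (1 < n)%N.
Local Open Scope ring_scope.

Lemma id_point_Pset k : Pset n (per_point 1 id : 'S_k.+1 -> R).
Proof.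
apply: per_point_Pset => //.
move=> [o [_ o_dec]]; have [] := o_dec (Ordinal (ltnW n_gt1)) (Ordinal n_gt1) isT.
by rewrite /=; lia.
Qed.

Lemma id_point_nomax k (tau : 'S_k.+1) :
  tau ord_max != ord_max -> (per_point 1 id tau : R) = 0.
Proof.
move=> tau_nomax; suff tau_F : pat_win tau (periodic 1 id) 0 = false.
  by rewrite /per_point /= tau_F mul0r.
apply/negbTE; apply: contra tau_nomax => /is_patternP tau_id.
by apply/eqP/perm_max_last => j lt_jk; rewrite tau_id /periodic !divn1 !modn1 !muln1 !addn0.
Qed.

Lemma dsum_point_Pset k (pi : 'S_k.+1) : pi \in Av n k.+1 ->
  Pset n (per_point (k.+1 + k.+1) (dsum_id pi) : 'S_k.+1 -> R).
Proof.
move=> pi_Av; apply: per_point_Pset => //; first exact/permutes_dsum_id/leq_addr.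
by move/(dsum_id_decr_in n_gt1)/decr_inP; move: pi_Av; rewrite inE => /negP.
Qed.

Lemma dsum_point_diag k (pi : 'S_k.+1) : (per_point (k.+1 + k.+1) (dsum_id pi) pi : R) != 0.
Proof.
rewrite mulf_neq0 ?invr_eq0 ?pnatr_eq0 // -lt0n -has_count; apply/hasP.
by exists 0%N; [rewrite mem_iota | apply: pat_win_dsum0].
Qed.

Lemma dsum_point_win k (pi tau : 'S_k.+1) :
  (per_point (k.+1 + k.+1) (dsum_id pi) tau : R) != 0 ->
  exists2 i, (i < k.+1 + k.+1)%N & pat_win tau (periodic (k.+1 + k.+1) (dsum_id pi)) i.
Proof.
rewrite /per_point mulf_eq0 negb_or pnatr_eq0 -lt0n -has_count => /andP[/hasP[i]].
by rewrite mem_iota => /andP[_ lt_i] tau_F _; exists i.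
Qed.

Lemma Pset_aff_indep_exists k :
  exists V : 'I_#|Av_nomax n k|.+1 -> 'S_k.+1 -> R, (forall i, Pset n (V i)) /\ aff_indep V.
Proof.
pose pt (pi : 'S_k.+1) : 'S_k.+1 -> R := per_point (k.+1 + k.+1) (dsum_id pi).
have nomax (pi : 'S_k.+1) : pi \in Av_nomax n k -> pi ord_max != ord_max /\ pi \in Av n k.+1.
  by rewrite in_setD inE => /andP[].
pose V (i : 'I_#|Av_nomax n k|.+1) : 'S_k.+1 -> R :=
  if unlift ord0 i is Some j then pt (enum_val j) else per_point 1 id.
exists V; split=> [i | c c_V].
  rewrite /V; case: unlift => [j |]; last exact: id_point_Pset.
  by have [_ pi_Av] := nomax _ (enum_valP j); apply: dsum_point_Pset.
apply: (@triangular_indep _ _ _ (fun j => pt (enum_val j)) enum_val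
                          (fun j => rlmin_count (enum_val j))).
- by move=> j; apply: dsum_point_diag.
- move=> j j' ne_jj' /dsum_point_win[i lt_i tau_F].
  have [pi_nomax _] := nomax _ (enum_valP j); have [tau_nomax _] := nomax _ (enum_valP j').
  apply: rlmin_count_lt lt_i pi_nomax tau_nomax _ tau_F.
  by apply: contra ne_jj' => /eqP/enum_val_inj ->.
move=> j'; have [tau_nomax _] := nomax _ (enum_valP j').
rewrite -[RHS](c_V (enum_val j')); apply: eq_bigr => j _.
by rewrite /V liftK unlift_none id_point_nomax // subr0.
Qed.

End LowerBound.

Theorem mainTheorem8 (R : realType) (n k : nat) :
  (2 <= n)%N -> (1 <= k)%N ->
  has_affine_dim (@Pset R n k) (#|Av n k| - #|Av n k.-1|)%N.
Proof.
move=> n_gt1; case: k => [//|k] _ /=; rewrite -card_Av_nomax //; split.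
  by have [V [V_P V_indep]] := Pset_aff_indep_exists R n_gt1 k; exists V.
by move=> v v_P; apply: Pset_not_aff_indep (leqnn _) v_P.
Qed.
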